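(* Let $(a_n)_{n\geq 0}$ be a primary pseudo-polynomial and $f=\sum_{n\ge0}a_nx^n$ its generating series. Then for every positive integer $n$, the integer $\det H_n(f)$ is divisible by $$\prod_{\substack{p\le n-1\\ p \text{ prime}}} p^{\,n-p}.$$
   Context: A sequence of integers $(a_n)_{n\ge0}$ is a primary pseudo-polynomial if $a_{n+p}\equiv a_n \pmod p$ for every integer $n\ge 0$ and every prime $p$. For $n\ge1$, the $n$-th Hankel matrix of $f$ is $H_n(f)=(a_{i+j-2})_{1\le i,j\le n}$. *)

From mathcomp Require Import all_boot all_order all_algebra.
Set Implicit Arguments. Unset Strict Implicit. Unset Printing Implicit Defensive.
Import GRing.Theory Num.Theory.
Local Open Scope ring_scope.

Definition primary_pseudo_polynomial (a : nat -> int) : Prop :=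
  forall (n p : nat), prime p -> (a (n + p)%N = a n %[mod (p%:Z)])%Z.

(* n-th Hankel matrix (a_{i+j-2})_{1<=i,j<=n}, written with 0-based indices *)
Definition hankel (a : nat -> int) (n : nat) : 'M[int]_n :=
  \matrix_(i < n, j < n) a (i + j)%N.

(* Fix a prime p.  Left multiplication by the unitriangular matrix 1 - S, where
   S shifts rows down by p, keeps the determinant of the Hankel matrix and
   replaces each row i >= p by (a_{i+j} - a_{i-p+j})_j, which is divisible by p
   because a_{k+p} = a_k (mod p).  These n - p rows give the factor p^(n-p), and
   the powers of distinct primes are coprime. *)

From mathcomp Require Import all_boot all_order all_algebra.
Local Open Scope ring_scope.
Import GRing.Theory.

Lemma prodr_ord_geq (R : pzSemiRingType) (n p : nat) (x : R) :
  \prod_(i < n) (if (p <= i)%N then x else 1) = x ^+ (n - p).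
Proof.
rewrite -big_mkcond -prodr_const_nat big_geq_mkord.
by apply: eq_bigl => i.
Qed.

Definition shift_mx (R : pzSemiRingType) (n p : nat) : 'M[R]_n :=
  \matrix_(i, k) ((k + p)%N == i)%:R.

Lemma det_1_sub_shift_mx (R : comPzRingType) (n p : nat) : (0 < p)%N ->
  \det (1 - shift_mx R n p) = 1.
Proof.
move=> p_gt0; rewrite det_trig.
  rewrite big1 // => i _; rewrite !mxE eqxx -[X in (_ == X)%N]addn0.
  by rewrite eqn_add2l eqn0Ngt p_gt0 subr0.
apply/forallP => i; apply/forallP => j; apply/implyP => lt_ij.
rewrite !mxE -val_eqE (ltn_eqF lt_ij) gtn_eqF ?subr0 //.
exact: leq_trans lt_ij (leq_addr _ _).
Qed.

Lemma mul_shift_mx (R : pzSemiRingType) (m n p : nat) (f : nat -> 'I_m -> R) :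
  shift_mx R n p *m \matrix_(i < n, j < m) f i j =
  \matrix_(i, j) (if (p <= i)%N then f (i - p)%N j else 0).
Proof.
apply/matrixP => i j; rewrite !mxE; case: ifP => [le_p_i | gt_p_i].
  have lt_ip_n : (i - p < n)%N by rewrite (leq_ltn_trans (leq_subr _ _)).
  rewrite (bigD1 (Ordinal lt_ip_n)) //= !mxE subnK // eqxx mul1r.
  rewrite big1 ?addr0 // => k /eqP ne_k; rewrite !mxE.
  case: eqP => [def_i | _]; last by rewrite mul0r.
  by case: ne_k; apply: val_inj; rewrite /= -def_i addnK.
rewrite big1 // => k _; rewrite !mxE.
case: eqP => [def_i | _]; last by rewrite mul0r.
by rewrite -def_i leq_addl in gt_p_i.
Qed.

Lemma dvdz_det_rows (n p : nat) (d : int) (A : 'M[int]_n) :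
  (forall i j : 'I_n, (p <= i)%N -> (d %| A i j)%Z) -> (d ^+ (n - p) %| \det A)%Z.
Proof.
move=> d_rows.
pose w := \row_(i < n) (if (p <= i)%N then d else 1).
pose C := \matrix_(i, j) (if (p <= i)%N then (A i j %/ d)%Z else A i j).
have -> : A = diag_mx w *m C.
  apply/matrixP => i j; rewrite mul_diag_mx !mxE.
  by case: ifP => [le_p_i | _]; rewrite ?mul1r // mulrC divzK ?d_rows.
rewrite det_mulmx det_diag.
under eq_bigr do rewrite mxE.
by rewrite prodr_ord_geq dvdz_mulr.
Qed.

Lemma dvdz_det_hankel (a : nat -> int) (n p : nat) : (0 < p)%N ->
  (forall k, (p%:Z %| a (k + p)%N - a k)%Z) ->
  (p%:Z ^+ (n - p) %| \det (hankel a n))%Z.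
Proof.
move=> p_gt0 a_p.
rewrite -[\det _]mul1r -(det_1_sub_shift_mx int n p p_gt0) -det_mulmx.
apply: dvdz_det_rows => i j le_p_i.
rewrite mulmxBl mul1mx (mul_shift_mx _ _ _ _ (fun i j => a (i + j)%N)) !mxE le_p_i.
by rewrite -{1}(subnK le_p_i) addnAC a_p.
Qed.

Lemma dvdn_prod_prime_pow (k m : nat) (e : nat -> nat) :
  (forall p, (p < k)%N -> prime p -> (p ^ e p %| m)%N) ->
  (\prod_(p < k | prime p) p ^ e p %| m)%N.
Proof.
elim: k => [|k IHk] dvd_m; first by rewrite big_ord0 dvd1n.
rewrite big_mkcond big_ord_recr /= -big_mkcond /=.
have dvd_prod := IHk (fun p lt_pk => dvd_m p (ltnW lt_pk)).
case: ifP => [k_pr | _]; last by rewrite muln1.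
have co_k : coprime (\prod_(p < k | prime p) p ^ e p) (k ^ e k).
  rewrite coprimeXr // coprime_sym.
  apply: (big_ind (coprime k)) => [|x y|i i_pr]; first exact: coprimen1.
    by rewrite coprimeMr => -> ->.
  rewrite coprimeXr // prime_coprime // dvdn_prime2 //.
  by rewrite neq_ltn ltn_ord orbT.
by rewrite Gauss_dvd // dvd_prod dvd_m.
Qed.

Theorem lemma2 (a : nat -> int) (n : nat) :
  primary_pseudo_polynomial a -> (0 < n)%N ->
  ((\prod_(p < n | prime p) p ^ (n - p))%N%:Z %| \det (hankel a n))%Z.
Proof.
move=> a_ppp _; apply: dvdn_prod_prime_pow => p _ p_pr.
have a_p k : (p%:Z %| a (k + p)%N - a k)%Z.
  by rewrite -eqz_mod_dvd; apply/eqP; apply: a_ppp.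
have := dvdz_det_hankel a n p (prime_gt0 p_pr) a_p.
by rewrite -!natz -natrX natz.
Qed.
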